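(* Let $n\geq 1$ and let $C$ be an all-ones CRC in $G_n$ with covering radius $\rho\geq 2$, $c_1=1$ and $c_2=2$. Then there is a CRC $D$ in $H(2n,2)$ with the same parameter matrix such that $C=\{x\in\mathbb{Z}^n:(\tau(x_1\bmod 4),\ldots,\tau(x_n\bmod 4))\in D\}$.
   Context: $G_n$: vertex set $\mathbb{Z}^n$, $x\sim y$ iff $\sum_i|x_i-y_i|=1$. $H(2n,2)$: binary Hamming graph on $\{0,1\}^{2n}$. For a code $C$ with covering radius $\rho$, $C_i=\{v:d(v,C)=i\}$; $C$ is a CRC if for all $i,j$ every vertex of $C_i$ has the same number $\alpha_{ij}$ of neighbours in $C_j$, with $\alpha_{ij}=0$ for $|i-j|>1$; $a_i=\alpha_{ii}$, $c_i=\alpha_{i,i-1}$; parameter matrix $(\alpha_{ij})$. $C$ is all-ones if $a_i=1$ for all $i$. $\tau$ is the Gray map $\tau(0)=(00),\tau(1)=(10),\tau(2)=(11),\tau(3)=(01)$, applied coordinatewise and concatenated. *)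

From HB Require Import structures.
From mathcomp Require Import all_boot all_order all_algebra.
From mathcomp Require Import boolp.
Set Implicit Arguments. Unset Strict Implicit. Unset Printing Implicit Defensive.
Import GRing.Theory Num.Theory.

(* ---------- Generic graph notions, graph given by (duplicate-free)
   neighbour lists nbrs : V -> seq V ---------- *)
Section Graph.
Variables (V : eqType) (nbrs : V -> seq V).

Fixpoint walk (k : nat) (x y : V) : Prop :=
  match k with
  | 0 => x = y
  | k'.+1 => exists2 z, z \in nbrs x & walk k' z y
  end.

Definition distC (C : V -> Prop) (v : V) (i : nat) : Prop :=
  (exists c, C c /\ walk i v c) /\
  (forall j, (j < i)%N -> forall c, C c -> ~ walk j v c).

Definition covRadius (C : V -> Prop) (rho : nat) : Prop :=
  (forall v, exists2 i, (i <= rho)%N & distC C v i) /\ (exists v, distC C v rho).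

Definition nbrsIn (C : V -> Prop) (v : V) (j : nat) : nat :=
  count (fun w => `[< distC C w j >]) (nbrs v).

Definition isCRC (C : V -> Prop) (rho : nat) (alpha : nat -> nat -> nat) : Prop :=
  [/\ covRadius C rho,
      (forall i j v, (i <= rho)%N -> (j <= rho)%N -> distC C v i ->
         nbrsIn C v j = alpha i j)
    & (forall i j, (i <= rho)%N -> (j <= rho)%N -> (j.+1 < i)%N \/ (i.+1 < j)%N ->
         alpha i j = 0)].

End Graph.

(* all-ones: a_i = alpha_{ii} = 1 for all 0 <= i <= rho *)
Definition allOnes (rho : nat) (alpha : nat -> nat -> nat) : Prop :=
  forall i, (i <= rho)%N -> alpha i i = 1%N.

Definition unitv n (i : 'I_n) : {ffun 'I_n -> int} :=
  [ffun k => Posz (nat_of_bool (k == i))].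

(* neighbours of x in G_n: the y with sum_i |x_i - y_i| = 1, i.e. x +- e_i *)
Definition gridNbrs n (x : {ffun 'I_n -> int}) : seq {ffun 'I_n -> int} :=
  [seq [ffun k => (x k + unitv i k)%R] | i <- enum 'I_n] ++
  [seq [ffun k => (x k - unitv i k)%R] | i <- enum 'I_n].

Definition flipAt m (x : {ffun 'I_m -> bool}) (i : 'I_m) : {ffun 'I_m -> bool} :=
  [ffun k => if k == i then ~~ x k else x k].

Definition hamNbrs m (x : {ffun 'I_m -> bool}) : seq {ffun 'I_m -> bool} :=
  [seq flipAt x i | i <- enum 'I_m].

Definition tau (z : int) : bool * bool :=
  match (z %% 4)%Z with
  | Posz 0 => (false, false)
  | Posz 1 => (true, false)
  | Posz 2 => (true, true)
  | _ => (false, true)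
  end.

Lemma half_ord_lt n (j : 'I_(n.*2)) : (j./2 < n)%N.
Proof. by rewrite ltn_half_double. Qed.

Definition half_ord n (j : 'I_(n.*2)) : 'I_n := Ordinal (half_ord_lt j).

(* (tau(x_1 mod 4), ..., tau(x_n mod 4)) in {0,1}^{2n}:
   coordinates 2k, 2k+1 are the two bits of tau(x_k mod 4) *)
Definition gray n (x : {ffun 'I_n -> int}) : {ffun 'I_(n.*2) -> bool} :=
  [ffun j => let p := tau (x (half_ord j)) in if odd j then p.2 else p.1].

From HB Require Import structures.
From mathcomp Require Import all_boot all_order all_algebra.
From mathcomp Require Import boolp zify.
Set Implicit Arguments. Unset Strict Implicit. Unset Printing Implicit Defensive.
Import GRing.Theory Num.Theory.

(* Since a_0 = 1, every codeword c has exactly one neighbouring codeword c + e;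
   call {c, c + e} a domino. Counting the neighbours at each distance from C of
   the points around a domino, using a_0 = a_1 = c_1 = 1 and c_2 = 2, forces
   c - 3e, c - 4e and c + 4f (for f <> +-e) into C, and c + 4e by symmetry of
   the domino. So C is invariant under translation by 4 Z^n.
   The Gray map sends the 2n neighbours of x bijectively onto the 2n neighbours
   of its image, and its fibres are the classes of Z^n modulo 4. Hence C is the
   full preimage of its image D, walks project and lift, distances to C and to
   D agree, and D is completely regular with the same parameters. *)

Section CountLemmas.
Variables (T : eqType) (P : pred T) (s : seq T).

Lemma count_eq1_inj x y : count P s = 1%N ->
  x \in s -> y \in s -> P x -> P y -> x = y.
Proof.
rewrite -size_filter => sz1 xs ys Px Py.
have := mem_filter P x s; have := mem_filter P y s; rewrite Px Py xs ys.
by case: (filter P s) sz1 => [|z []] // _; rewrite !inE => /eqP -> /eqP ->.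
Qed.

Lemma count_eq1_witness x : count P s = 1%N ->
  {in s, forall y, y != x -> ~~ P y} -> P x.
Proof.
move=> cP hs; have /hasP[y ys Py] : has P s by rewrite has_count cP.
by case: (eqVneq y x) => [<- // | yx]; move: (hs y ys yx); rewrite Py.
Qed.

Lemma count_eq2_third x y z : count P s = 2%N ->
  x \in s -> y \in s -> z \in s -> x != y -> z != x -> z != y ->
  P x -> P y -> ~~ P z.
Proof.
move=> cP xs ys zs xy zx zy Px Py; apply/negP => Pz.
have : (size [:: x; y; z] <= size (filter P s))%N.
  apply: uniq_leq_size; first by rewrite /= !inE negb_or xy !(eq_sym _ z) zx zy.
  by move=> w; rewrite !inE mem_filter => /or3P[] /eqP ->; apply/andP.
by rewrite size_filter cP.
Qed.

Hypothesis s_uniq : uniq s.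

Lemma count_eq2_witness x y : count P s = 2%N -> x \in s -> P x ->
  {in s, forall z, z != x -> z != y -> ~~ P z} -> P y.
Proof.
move=> cP xs Px hs; apply/negPn/negP => nPy.
have : (size (filter P s) <= size [:: x])%N.
  apply: uniq_leq_size; first exact: filter_uniq.
  move=> z; rewrite mem_filter inE => /andP[Pz zs]; apply/negPn/negP => zx.
  by case: (eqVneq z y) => [zy | /(hs z zs zx)]; [rewrite -zy Pz in nPy | rewrite Pz].
by rewrite size_filter cP.
Qed.

End CountLemmas.

Section CodeDistance.
Variables (V : eqType) (nbrs : V -> seq V) (C : V -> Prop) (rho : nat)
  (alpha : nat -> nat -> nat).
Hypothesis HC : isCRC nbrs C rho alpha.

Lemma distC_inj v i j : distC nbrs C v i -> distC nbrs C v j -> i = j.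
Proof.
move=> [[c [Cc wi]] mi] [[d [Cd wj]] mj].
by case: (ltngtP i j) => // [/mj /(_ c Cc) | /mi /(_ d Cd)].
Qed.

Lemma distC_exists v : exists i, `[< distC nbrs C v i >].
Proof. by case: HC => -[cov _] _ _; case: (cov v) => i _ /asboolP; exists i. Qed.

Definition cdist v : nat := xchoose (distC_exists v).

Lemma cdistP v : distC nbrs C v (cdist v).
Proof. exact/asboolP/(xchooseP (distC_exists v)). Qed.

Lemma cdist_eq v i : distC nbrs C v i -> cdist v = i.
Proof. exact: distC_inj (cdistP v). Qed.

Lemma cdist_le v : (cdist v <= rho)%N.
Proof. by case: HC => -[cov _] _ _; case: (cov v) => i le_i /cdist_eq ->. Qed.

Lemma cdist_eq0 v : cdist v = 0%N <-> C v.
Proof.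
split=> [d0 | Cv]; last by apply: cdist_eq; split=> [|//]; exists v.
by have := cdistP v; rewrite d0 => -[[c [Cc /= ->]] _].
Qed.

Lemma cdist_nbr_le v w : v \in nbrs w -> (cdist w <= (cdist v).+1)%N.
Proof.
move=> vw; have [[c [Cc wc]] _] := cdistP v; have [_ mw] := cdistP w.
by rewrite leqNgt; apply/negP => /mw /(_ c Cc); apply; exists v.
Qed.

Lemma count_cdist_nbrs v j : (j <= rho)%N ->
  count (fun w => cdist w == j) (nbrs v) = alpha (cdist v) j.
Proof.
case: HC => _ Hn _ le_j; rewrite -(Hn _ _ v (cdist_le v) le_j (cdistP v)) /nbrsIn.
apply: eq_count => w; apply/eqP/asboolP => [<- | /cdist_eq //]; exact: cdistP.
Qed.

End CodeDistance.

Section Covering.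
Variables (V W : eqType) (nbrsV : V -> seq V) (nbrsW : W -> seq W) (g : V -> W).
Hypothesis g_surj : forall w, exists v, g v = w.
Hypothesis g_nbrs : forall v, perm_eq (map g (nbrsV v)) (nbrsW (g v)).
Variable C : V -> Prop.
Hypothesis C_saturated : forall x y, g x = g y -> C x -> C y.

Definition image_code (w : W) : Prop := exists2 v, g v = w & C v.

Lemma image_codeE v : image_code (g v) <-> C v.
Proof. by split=> [[x /C_saturated] | Cv]; [apply | exists v]. Qed.

Lemma walk_map k v c : walk nbrsV k v c -> walk nbrsW k (g v) (g c).
Proof.
elim: k v => [|k IH] v /=; first by move->.
by case=> z zv /IH; exists (g z); rewrite // -(perm_mem (g_nbrs v)) map_f.
Qed.

Lemma walk_lift k v w : walk nbrsW k (g v) w -> exists2 c, g c = w & walk nbrsV k v c.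
Proof.
elim: k v => [|k IH] v /=; first by move<-; exists v.
case=> z; rewrite -(perm_mem (g_nbrs v)) => /mapP[y yv ->] /IH[c gc wc].
by exists c => //; exists y.
Qed.

Lemma distC_image v i : distC nbrsW image_code (g v) i <-> distC nbrsV C v i.
Proof.
split=> -[[c [Cc wc]] min_i].
- have [y gy wy] := walk_lift wc; split.
    by exists y; split=> //; apply/image_codeE; rewrite gy.
  by move=> j lt_ji x Cx /walk_map; apply: (min_i j lt_ji); apply/image_codeE.
- split; first by exists (g c); split; [apply/image_codeE | apply: walk_map].
  move=> j lt_ji w Cw /walk_lift[y gy wy]; apply: (min_i j lt_ji y _ wy).
  by apply/image_codeE; rewrite gy.
Qed.

Lemma isCRC_image rho alpha :
  isCRC nbrsV C rho alpha -> isCRC nbrsW image_code rho alpha.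
Proof.
case=> -[cov [v0 dv0]] Hn H0; split=> //.
- split; last by exists (g v0); apply/distC_image.
  by move=> w; have [v <-] := g_surj w; have [i le_i /distC_image] := cov v; exists i.
- move=> i j w le_i le_j; have [v <-] := g_surj w => /distC_image dv.
  rewrite /nbrsIn -(permP (g_nbrs v)) count_map -(Hn i j v le_i le_j dv).
  by apply: eq_count => y /=; rewrite (propext (distC_image y j)).
Qed.

End Covering.

Local Notation point n := {ffun 'I_n -> int}.
Local Notation word m := {ffun 'I_m -> bool}.

Local Open Scope ring_scope.

Definition dirs n : seq (point n) :=
  [seq unitv i | i <- enum 'I_n] ++ [seq - unitv i | i <- enum 'I_n].

Section Grid.
Variable n : nat.
Implicit Types (x u : point n).

Lemma gridNbrsE x : gridNbrs x = [seq x + u | u <- dirs n].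
Proof.
rewrite /gridNbrs map_cat -!map_comp.
by congr (_ ++ _); apply: eq_map => i; apply/ffunP => k; rewrite !ffunE.
Qed.

Lemma unitv_dirs (i : 'I_n) : unitv i \in dirs n.
Proof. by rewrite mem_cat map_f ?mem_enum. Qed.

Lemma dirsN u : u \in dirs n -> - u \in dirs n.
Proof.
rewrite !mem_cat => /orP[] /mapP[i _ ->]; apply/orP; [right | left];
  by apply/mapP; exists i; rewrite ?mem_enum ?opprK.
Qed.

Lemma dirs_neqN u : u \in dirs n -> u != - u.
Proof.
rewrite mem_cat => /orP[] /mapP[i _ ->]; apply/eqP => /ffunP /(_ i);
  rewrite !ffunE eqxx; lia.
Qed.

Lemma uniq_dirs : uniq (dirs n).
Proof.
have unitv_inj : injective (@unitv n).
  by move=> i j /ffunP /(_ i); rewrite !ffunE eqxx; case: eqP.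
rewrite cat_uniq (map_inj_uniq unitv_inj) (map_inj_uniq (inj_comp oppr_inj unitv_inj)).
rewrite enum_uniq andbT /=; apply/hasPn => _ /mapP[i _ ->]; apply/mapP => -[j _] /ffunP /(_ i).
by rewrite !ffunE eqxx; case: eqP.
Qed.

Lemma gridNbrs_sym x y : y \in gridNbrs x -> x \in gridNbrs y.
Proof.
rewrite !gridNbrsE => /mapP[u /dirsN Nu ->]; apply/mapP; exists (- u) => //.
by rewrite addrK.
Qed.

End Grid.

Section LocalStructure.
Variables (n : nat) (C : point n -> Prop) (rho : nat) (alpha : nat -> nat -> nat).
Hypothesis HC : isCRC (@gridNbrs n) C rho alpha.
Hypothesis rho_gt0 : (0 < rho)%N.
Hypotheses (a00 : alpha 0%N 0%N = 1%N) (a10 : alpha 1%N 0%N = 1%N)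
  (a11 : alpha 1%N 1%N = 1%N) (a21 : alpha 2%N 1%N = 2%N).

Local Notation d := (cdist HC).
Implicit Types (x c e f u : point n).

Lemma cdist_step x u : u \in dirs n -> (d (x + u)%R <= (d x).+1)%N.
Proof.
by move=> du; apply: cdist_nbr_le; apply: gridNbrs_sym; rewrite gridNbrsE map_f.
Qed.

Lemma cdist_nbr_gt1 x u : u \in dirs n -> (1 < d (x + u)%R)%N -> d x != 0%N.
Proof. by move=> du gt1; rewrite -lt0n; apply: leq_trans gt1 (cdist_step x du). Qed.

Lemma cdist_nbr_ge2 x u : u \in dirs n -> d x = 2%N -> d (x + u) != 1%N ->
  (1 < d (x + u)%R)%N.
Proof.
move=> du dx; have : (d x <= (d (x + u)%R).+1)%N.
  by apply: cdist_nbr_le; rewrite gridNbrsE map_f.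
rewrite dx; lia.
Qed.

Lemma count_cdist_dirs x j : (j <= rho)%N ->
  count (fun u => d (x + u) == j) (dirs n) = alpha (d x) j.
Proof. by move=> le_j; rewrite -count_cdist_nbrs // gridNbrsE count_map. Qed.

Section Level.
Variables (x : point n) (j : nat).
Hypothesis le_j : (j <= rho)%N.

Lemma level1_dir_inj u u' : alpha (d x) j = 1%N -> u \in dirs n -> u' \in dirs n ->
  d (x + u) = j -> d (x + u') = j -> u = u'.
Proof.
rewrite -(count_cdist_dirs x le_j) => c1 du du' xu xu'.
by apply: (count_eq1_inj c1) => //=; rewrite ?xu ?xu'.
Qed.

Lemma level1_dir_only u : alpha (d x) j = 1%N ->
  {in dirs n, forall u', u' != u -> d (x + u') != j} -> d (x + u) = j.
Proof.
rewrite -(count_cdist_dirs x le_j) => c1 others; apply/eqP.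
exact: (count_eq1_witness c1 others).
Qed.

Lemma level2_dir_excl a b u : alpha (d x) j = 2%N ->
  a \in dirs n -> b \in dirs n -> u \in dirs n -> a != b -> u != a -> u != b ->
  d (x + a) = j -> d (x + b) = j -> d (x + u) != j.
Proof.
rewrite -(count_cdist_dirs x le_j) => c2 da db du ab ua ub xa xb.
by apply: (count_eq2_third c2 da db du ab ua ub) => /=; rewrite ?xa ?xb.
Qed.

Lemma level2_dir_only a b : alpha (d x) j = 2%N -> a \in dirs n -> d (x + a) = j ->
  {in dirs n, forall u, u != a -> u != b -> d (x + u) != j} -> d (x + b) = j.
Proof.
rewrite -(count_cdist_dirs x le_j) => c2 da xa others; apply/eqP.
by apply: (count_eq2_witness (uniq_dirs n) c2 da) => //=; rewrite xa.
Qed.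

End Level.

Lemma domino_nbr c e u : d c = 0%N -> d (c + e) = 0%N -> e \in dirs n ->
  u \in dirs n -> u != e -> d (c + u) = 1%N.
Proof.
move=> dc dce de du ue; have := cdist_step c du; rewrite dc.
have : d (c + u) != 0%N.
  apply: contra ue => /eqP dcu; apply/eqP.
  by apply: (level1_dir_inj (x := c) (leq0n rho)); rewrite ?dc.
lia.
Qed.

Lemma domino_dist2 c e f u : d c = 0%N -> d (c + e) = 0%N -> e \in dirs n ->
  f \in dirs n -> f != e -> f != - e ->
  u \in dirs n -> u != - f -> u != e -> d (c + f + u) = 2%N.
Proof.
move=> dc dce de df fe fNe du uNf ue; have dcf := domino_nbr dc dce de df fe.
have : d (c + f + u) != 0%N.
  apply: contra uNf => /eqP dcfu; apply/eqP.
  by apply: (level1_dir_inj (x := c + f) (leq0n rho)); rewrite ?dcf ?addrK ?dirsN.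
have : d (c + f + u) != 1%N.
  apply: contra ue => /eqP dcfu; apply/eqP.
  apply: (level1_dir_inj (x := c + f) rho_gt0); rewrite ?dcf // addrAC.
  by apply: (domino_nbr (e := - e)); rewrite ?addrK ?dirsN.
have := cdist_step (c + f) du; rewrite dcf; lia.
Qed.

Section Domino.
Variables (c e : point n).
Hypotheses (dc : d c = 0%N) (dce : d (c + e) = 0%N) (de : e \in dirs n).
Let dNe : - e \in dirs n := dirsN de.
Let e_neqN : e != - e := dirs_neqN de.

Lemma domino_back1 : d (c - e) = 1%N.
Proof. by apply: (domino_nbr dc dce); rewrite // eq_sym. Qed.

Lemma domino_back2 : d (c - e - e) = 1%N.
Proof.
apply: (level1_dir_only rho_gt0); rewrite ?domino_back1 // => u du uNe.
have [-> | ue] := eqVneq u e; first by rewrite subrK dc.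
by rewrite addrAC (domino_dist2 dc dce) // ?eqr_opp eq_sym.
Qed.

Lemma domino_side_back2 f : f \in dirs n -> f != e -> f != - e ->
  (2 <= d (c + f - e - e)%R)%N.
Proof.
move=> df fe fNe; have dcfe : d (c + f - e) = 2%N.
  by apply: (domino_dist2 dc dce); rewrite // ?eqr_opp eq_sym.
have : d (c + f - e - e) != 1%N.
  apply: (level2_dir_excl rho_gt0 (a := - f) (b := e)); rewrite ?dcfe ?dirsN //.
  - by rewrite -eqr_opp opprK.
  - by rewrite eqr_opp eq_sym.
  - by rewrite eq_sym.
  - by rewrite addrAC addrK domino_back1.
  - by rewrite subrK; apply: (domino_nbr dc dce).
exact: cdist_nbr_ge2.
Qed.

Lemma domino_back3 : d (c - e - e - e) = 0%N.
Proof.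
apply: (level1_dir_only (leq0n rho)); rewrite ?domino_back2 // => u du uNe.
have [-> | ue] := eqVneq u e; first by rewrite subrK domino_back1.
by rewrite !(addrAC _ _ u) -lt0n (leq_trans _ (domino_side_back2 _ _ _)).
Qed.

Lemma domino_back4 : d (c - e - e - e - e) = 0%N.
Proof.
apply: (level1_dir_only (leq0n rho)); rewrite ?domino_back3 // => u du uNe.
have [-> | ue] := eqVneq u e; first by rewrite subrK domino_back2.
apply: (cdist_nbr_gt1 de); rewrite addrAC subrK !(addrAC _ _ u).
exact: domino_side_back2.
Qed.

Section Side.
Variable f : point n.
Hypotheses (df : f \in dirs n) (fe : f != e) (fNe : f != - e).
Let f_neqN : f != - f := dirs_neqN df.

Lemma domino_side2 : d (c + f + f) = 2%N.
Proof. exact: (domino_dist2 dc dce). Qed.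

Lemma domino_side2_step u : u \in dirs n -> u != f -> u != - f ->
  (2 <= d (c + f + f + u)%R)%N.
Proof.
move=> du uf uNf; have [-> | ue] := eqVneq u e.
  by rewrite !(addrAC _ _ e) (domino_dist2 (e := - e)) ?opprK ?addrK.
have dcfu : d (c + f + u) = 2%N by apply: (domino_dist2 dc dce); rewrite // -eqr_opp opprK.
have : d (c + f + u + f) != 1%N.
  apply: (level2_dir_excl rho_gt0 (a := - f) (b := - u)); rewrite ?dcfu ?dirsN //.
  - by rewrite eqr_opp eq_sym.
  - by rewrite -eqr_opp opprK eq_sym.
  - by rewrite addrAC addrK; apply: (domino_nbr dc dce).
  - by rewrite addrK; apply: (domino_nbr dc dce).
by move=> ne1; have := cdist_nbr_ge2 df dcfu ne1; rewrite addrAC.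
Qed.

Lemma domino_side3 : d (c + f + f + f) = 1%N.
Proof.
apply: (level2_dir_only rho_gt0 (a := - f)); rewrite ?domino_side2 ?dirsN //.
  by rewrite addrK; apply: (domino_nbr dc dce).
move=> u du uNf uf; have := domino_side2_step du uf uNf; lia.
Qed.

Lemma domino_side4 : d (c + f + f + f + f) = 0%N.
Proof.
apply: (level1_dir_only (leq0n rho)); rewrite ?domino_side3 // => u du uf.
have [-> | uNf] := eqVneq u (- f); first by rewrite addrK domino_side2.
apply: (cdist_nbr_gt1 (dirsN df)); rewrite addrAC addrK.
exact: domino_side2_step.
Qed.

End Side.
End Domino.

Lemma code_periodic x u : u \in dirs n -> C x -> C (x + u *+ 4).
Proof.
move=> du /(cdist_eq0 HC) dx; apply/(cdist_eq0 HC).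
have /hasP[e de /eqP dxe] : has (fun e => d (x + e) == 0%N) (dirs n).
  by rewrite has_count count_cdist_dirs // dx a00.
rewrite !mulrS mulr0n addr0 !addrA.
have [-> | ue] := eqVneq u e.
  have := domino_back3 (c := x + e) (e := - e) dxe; rewrite addrK !opprK.
  by apply; rewrite ?dirsN.
have [-> | uNe] := eqVneq u (- e); first exact: (domino_back4 dx dxe de).
exact: (domino_side4 dx dxe de du ue uNe).
Qed.

End LocalStructure.

Definition taui (p : bool * bool) : int :=
  match p with
  | (false, false) => 0 | (true, false) => 1 | (true, true) => 2 | (false, true) => 3
  end.

Lemma tauiK : cancel taui tau.
Proof. by case=> [[] []]. Qed.

Lemma modz4_cases z :
  [|| (z %% 4)%Z == 0, (z %% 4)%Z == 1, (z %% 4)%Z == 2 | (z %% 4)%Z == 3].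
Proof.
have := modz_ge0 z (isT : (4 : int) != 0); have := ltz_pmod z (isT : (0 : int) < 4).
by case: (z %% 4)%Z => [[|[|[|[|k]]]] | k].
Qed.

Lemma tauK z : taui (tau z) = (z %% 4)%Z.
Proof. by rewrite /tau; case/or4P: (modz4_cases z) => /eqP ->. Qed.

(* [(tau z).1 != (tau z).2] is the parity of [z]: going from [z] to [z + 1]
   flips this bit of [tau z], going to [z - 1] flips the other one. *)
Definition tau_par (z : int) : bool := (tau z).1 != (tau z).2.

Definition flip_bit (p : bool * bool) (b : bool) : bool * bool :=
  if b then (p.1, ~~ p.2) else (~~ p.1, p.2).

Lemma tauD1 z : tau (z + 1) = flip_bit (tau z) (tau_par z).
Proof. by rewrite /tau_par /tau -modzDml; case/or4P: (modz4_cases z) => /eqP ->. Qed.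

Lemma tauB1 z : tau (z - 1) = flip_bit (tau z) (~~ tau_par z).
Proof. by rewrite /tau_par /tau -modzDml; case/or4P: (modz4_cases z) => /eqP ->. Qed.

Section GrayMap.
Variable n : nat.
Implicit Types (x y : point n) (k : 'I_n) (b : bool).

Lemma gray_index_subproof k b : (b + k.*2 < n.*2)%N.
Proof. by case: b; rewrite /= ?ltn_double ?ltn_Sdouble ltn_ord. Qed.

Definition gray_index k b : 'I_(n.*2) := Ordinal (gray_index_subproof k b).

Lemma half_gray_index k b : half_ord (gray_index k b) = k.
Proof. by apply: val_inj; rewrite /= half_bit_double. Qed.

Lemma odd_gray_index k b : odd (gray_index k b) = b.
Proof. by case: b; rewrite /= ?odd_double. Qed.

Lemma gray_index_half (j : 'I_(n.*2)) : gray_index (half_ord j) (odd j) = j.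
Proof. by apply: val_inj; rewrite /= odd_double_half. Qed.

Lemma eq_gray_index (j : 'I_(n.*2)) k b :
  (j == gray_index k b) = (half_ord j == k) && (odd j == b).
Proof.
apply/eqP/andP => [-> | [/eqP <- /eqP <-]]; last by rewrite gray_index_half.
by rewrite half_gray_index odd_gray_index.
Qed.

Lemma gray_at_index x k b :
  gray x (gray_index k b) = if b then (tau (x k)).2 else (tau (x k)).1.
Proof. by rewrite ffunE half_gray_index odd_gray_index. Qed.

Lemma gray_addu x k : gray (x + unitv k) = flipAt (gray x) (gray_index k (tau_par (x k))).
Proof.
apply/ffunP => j; rewrite !ffunE eq_gray_index.
case: (eqVneq (half_ord j) k) => [-> | _] /=; last by rewrite addr0.
by rewrite tauD1; case: (tau (x k)) (tau_par (x k)) => a c []; case: (odd j).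
Qed.

Lemma gray_subu x k : gray (x - unitv k) = flipAt (gray x) (gray_index k (~~ tau_par (x k))).
Proof.
apply/ffunP => j; rewrite !ffunE eq_gray_index.
case: (eqVneq (half_ord j) k) => [-> | _] /=; last by rewrite subr0.
by rewrite tauB1; case: (tau (x k)) (tau_par (x k)) => a c []; case: (odd j).
Qed.

Definition flip_indices x : seq 'I_(n.*2) :=
  [seq gray_index k (tau_par (x k)) | k <- enum 'I_n] ++
  [seq gray_index k (~~ tau_par (x k)) | k <- enum 'I_n].

Lemma perm_flip_indices x : perm_eq (flip_indices x) (enum 'I_(n.*2)).
Proof.
have index_inj (f : 'I_n -> bool) : injective (fun k => gray_index k (f k)).
  by move=> k k' /(congr1 (@half_ord n)); rewrite !half_gray_index.
apply: uniq_perm; rewrite ?enum_uniq //.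
  rewrite cat_uniq !(map_inj_uniq (index_inj _)) enum_uniq andbT /=.
  apply/hasPn => _ /mapP[k _ ->]; apply/mapP => -[k' _] /eqP.
  rewrite eq_gray_index half_gray_index odd_gray_index => /andP[/eqP -> /eqP].
  by case: tau_par.
move=> j; rewrite mem_enum; apply/idP; rewrite mem_cat -[j]gray_index_half.
apply/orP; case: (eqVneq (odd j) (tau_par (x (half_ord j)))) => [-> | odd_j].
  by left; apply/mapP; exists (half_ord j); rewrite ?mem_enum.
right; apply/mapP; exists (half_ord j); rewrite ?mem_enum //.
by move: odd_j; case: odd; case: tau_par.
Qed.

Lemma gray_nbrs x : perm_eq (map (@gray n) (gridNbrs x)) (hamNbrs (gray x)).
Proof.
suff -> : map (@gray n) (gridNbrs x) = map (flipAt (gray x)) (flip_indices x).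
  by apply: perm_map; apply: perm_flip_indices.
rewrite gridNbrsE /dirs /flip_indices !map_cat -!map_comp.
by congr (_ ++ _); apply: eq_map => k /=; [apply: gray_addu | apply: gray_subu].
Qed.

Lemma gray_surj (q : word n.*2) : exists x, gray x = q.
Proof.
exists [ffun k => taui (q (gray_index k false), q (gray_index k true))].
apply/ffunP => j; rewrite -[in RHS](gray_index_half j) -[j in LHS]gray_index_half.
by rewrite gray_at_index ffunE tauiK; case: (odd j).
Qed.

Lemma gray_eq_mod4 x y k : gray x = gray y -> (x k = y k %[mod 4])%Z.
Proof.
move=> gxy; rewrite -!tauK; congr taui.
have := congr1 (fun q : word n.*2 => (q (gray_index k false), q (gray_index k true))) gxy.
by rewrite /= !gray_at_index -!surjective_pairing.
Qed.

End GrayMap.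

Section PeriodicCode.
Variables (n : nat) (C : point n -> Prop).
Hypothesis C_periodic : forall x u, u \in dirs n -> C x -> C (x + u *+ 4).

Lemma code_translate w x : C x -> C (x + w *+ 4).
Proof.
pose P w := forall x, C x -> C (x + w *+ 4).
have PD w1 w2 : P w1 -> P w2 -> P (w1 + w2).
  by move=> P1 P2 y Cy; rewrite mulrnDl addrA; apply: P2; apply: P1.
have Pdir u m : u \in dirs n -> P (u *+ m).
  move=> du; elim: m => [|m IH]; first by move=> y; rewrite mul0rn addr0.
  by rewrite mulrS; apply: PD => // y; apply: C_periodic.
have Pz k z : P (unitv k *~ z).
  case: z => m; first exact/Pdir/unitv_dirs.
  by rewrite NegzE mulrNz -mulNrn; apply/Pdir/dirsN/unitv_dirs.
suff Pw : P w by apply: Pw.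
have -> : w = \sum_k unitv k *~ w k.
  apply/ffunP => i; rewrite sum_ffunE (bigD1 i) //= big1 => [|k ki].
    by rewrite ffunMzE ffunE eqxx addr0 mulrzz mul1r.
  by rewrite ffunMzE ffunE eq_sym (negPf ki) mul0rz.
by apply: (big_ind P) => // y; rewrite mul0rn addr0.
Qed.

Lemma gray_saturated x y : gray x = gray y -> C x -> C y.
Proof.
move=> gxy /(code_translate [ffun k => ((y k - x k) %/ 4)%Z]); congr C.
apply/ffunP => k; have dvd4 : (4 %| y k - x k)%Z.
  by rewrite -eqz_mod_dvd; apply/eqP/esym/gray_eq_mod4.
apply/eqP; rewrite ffunE ffunMnE ffunE eq_sym addrC -subr_eq.
by rewrite -[(_ %/ _)%Z *+ 4]mulr_natr divzK.
Qed.

End PeriodicCode.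

Theorem mainTheorem10 (n : nat) (C : {ffun 'I_n -> int} -> Prop) (rho : nat)
    (alpha : nat -> nat -> nat) :
  (1 <= n)%N -> (2 <= rho)%N ->
  isCRC (@gridNbrs n) C rho alpha ->
  allOnes rho alpha -> alpha 1%N 0%N = 1%N -> alpha 2%N 1%N = 2%N ->
  exists D : {ffun 'I_(n.*2) -> bool} -> Prop,
    isCRC (@hamNbrs (n.*2)) D rho alpha /\ (forall x, C x <-> D (gray x)).
Proof.
move=> _ rho_ge2 HC all1 a10 a21.
have rho_gt0 : (0 < rho)%N := ltnW rho_ge2.
have C_periodic := code_periodic HC rho_gt0 (all1 _ (leq0n rho)) a10 (all1 _ rho_gt0) a21.
have C_saturated := gray_saturated C_periodic.
exists (image_code (@gray n) C); split.
  exact: (isCRC_image (nbrsW := @hamNbrs n.*2) (@gray_surj n) (@gray_nbrs n) C_saturated HC).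
by move=> x; rewrite image_codeE.
Qed.
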